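(* Let $\mathbb{L}_0$ and $\mathbb{L}_1$ be generators of Lindblad form on $M_d(\mathbb{C})$ and, for $\varepsilon\ge 0$, let $\mathbb{L}_\varepsilon=\mathbb{L}_0+\varepsilon\,\mathbb{L}_1$, generating the semigroup $\gamma^{(\varepsilon)}_t=e^{t\mathbb{L}_\varepsilon}$. Let $n(\varepsilon)$ denote the maximal number of mutually orthogonal density matrices $\rho_1,\dots,\rho_n$ (i.e. $\rho_j\rho_k=0$ for $j\neq k$) that are $\gamma^{(\varepsilon)}_t$-invariant, i.e. satisfy $\mathbb{L}_\varepsilon[\rho_j]=0$. Then $n(0)\ge n(\varepsilon)$ for all $\varepsilon$ with $0<\varepsilon\ll 1$ (i.e. for all sufficiently small $\varepsilon>0$).
   Context: A generator of Lindblad form on $M_d(\mathbb{C})$ is a linear map $\mathbb{L}[\rho]=-i[H,\rho]+\sum_\alpha\big(h_\alpha\rho h_\alpha^\dagger-\tfrac12\{h_\alpha^\dagger h_\alpha,\rho\}\big)$ with $H=H^\dagger\in M_d(\mathbb{C})$ and $h_\alpha\in M_d(\mathbb{C})$; it generates a semigroup $e^{t\mathbb{L}}$ of completely positive trace-preserving maps. A density matrix is a positive semidefinite matrix of trace one. *)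

From HB Require Import structures.
From mathcomp Require Import all_boot all_order all_algebra.
From mathcomp Require Import complex.
From mathcomp Require Import boolp reals.
Set Implicit Arguments. Unset Strict Implicit. Unset Printing Implicit Defensive.
Import Order.TTheory GRing.Theory Num.Theory.
Local Open Scope ring_scope.
Local Open Scope complex_scope.

Section Defs.
Variable R : realType.
Local Notation C := (R[i]).

Definition adj d (A : 'M[C]_d) : 'M[C]_d := (map_mx Num.conj A)^T.

Definition hermitian d (A : 'M[C]_d) : Prop := adj A = A.

Definition psd d (A : 'M[C]_d) : Prop :=
  hermitian A /\ forall v : 'cV[C]_d, 0 <= ((map_mx Num.conj v)^T *m A *m v) 0 0.

Definition density d (rho : 'M[C]_d) : Prop := psd rho /\ \tr rho = 1.

Definition lindblad_form d (L : 'M[C]_d -> 'M[C]_d) : Prop :=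
  exists (H : 'M[C]_d) (hs : seq 'M[C]_d), hermitian H /\
    forall rho : 'M[C]_d,
      L rho = - 'i *: (H *m rho - rho *m H)
              + \sum_(h <- hs) (h *m rho *m adj h
                   - (1/2) *: (adj h *m h *m rho + rho *m (adj h *m h))).

Definition orth_invariant_family d (L : 'M[C]_d -> 'M[C]_d) (k : nat) : Prop :=
  exists rho : 'I_k -> 'M[C]_d,
    (forall j, density (rho j)) /\ (forall j, L (rho j) = 0) /\
    (forall j l, j != l -> rho j *m rho l = 0).

(* Such a family always has at most d members (orthogonal nonzero PSD matrices),
   so maximizing over k <= d gives the true maximum. *)
Definition nmax d (L : 'M[C]_d -> 'M[C]_d) : nat :=
  \max_(k < d.+1 | `[< orth_invariant_family L k >]) k.

Definition pert d (L0 L1 : 'M[C]_d -> 'M[C]_d) (eps : R) : 'M[C]_d -> 'M[C]_d :=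
  fun rho => L0 rho + (eps%:C) *: L1 rho.

End Defs.

(* By compactness.  If the claim failed, there would be eps_n -> 0 and, for each
   n, m + 1 mutually orthogonal density matrices annihilated by L_(eps_n), where
   m = n(0).  Entries of density matrices are bounded by 1, so along a
   subsequence the families converge entrywise.  Positivity, unit trace and
   orthogonality are closed conditions, and since a Lindblad generator is a
   continuous map and L_eps -> L_0, the limits are annihilated by L_0: this gives
   m + 1 orthogonal L_0-invariant density matrices, a contradiction. *)

From HB Require Import structures.
From mathcomp Require Import all_boot all_order all_algebra.
From mathcomp Require Import complex.
From mathcomp Require Import boolp reals.
From mathcomp Require Import classical_sets topology normedtype sequences.
From mathcomp Require Import lra.
Import Order.TTheory GRing.Theory Num.Theory.
Import numFieldNormedType.Exports.
Local Open Scope ring_scope.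
Local Open Scope complex_scope.
Local Open Scope classical_set_scope.
Set Implicit Arguments. Unset Strict Implicit. Unset Printing Implicit Defensive.

Section ComplexConvergence.
Variable R : realType.
Local Notation C := (R[i]).

(* [R[i]] carries no topology here, so convergence is taken componentwise. *)
Definition ccvg (u : nat -> C) (z : C) : Prop :=
  (fun n => complex.Re (u n)) @ \oo --> complex.Re z /\
  (fun n => complex.Im (u n)) @ \oo --> complex.Im z.

Lemma eq_ccvg u v z : u =1 v -> ccvg u z -> ccvg v z.
Proof. by move=> /funext <-. Qed.

Lemma ccvg_cst c : ccvg (fun=> c) c.
Proof. by split; apply: cvg_cst. Qed.

Lemma ccvgD u v z w : ccvg u z -> ccvg v w -> ccvg (fun n => u n + v n) (z + w).
Proof.
move=> [u1 u2] [v1 v2]; split; rewrite raddfD; under eq_cvg do rewrite raddfD.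
- exact: cvgD u1 v1.
- exact: cvgD u2 v2.
Qed.

Lemma ccvgN u z : ccvg u z -> ccvg (fun n => - u n) (- z).
Proof.
move=> [u1 u2]; split; rewrite raddfN; under eq_cvg do rewrite raddfN.
- exact: cvgN u1.
- exact: cvgN u2.
Qed.

Lemma ReM (x y : C) :
  complex.Re (x * y) = complex.Re x * complex.Re y - complex.Im x * complex.Im y.
Proof. by case: x; case: y. Qed.

Lemma ImM (x y : C) :
  complex.Im (x * y) = complex.Re x * complex.Im y + complex.Im x * complex.Re y.
Proof. by case: x; case: y. Qed.

Lemma ccvgM u v z w : ccvg u z -> ccvg v w -> ccvg (fun n => u n * v n) (z * w).
Proof.
move=> [u1 u2] [v1 v2]; split.
- by rewrite ReM; under eq_cvg do rewrite ReM; exact: cvgB (cvgM u1 v1) (cvgM u2 v2).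
- by rewrite ImM; under eq_cvg do rewrite ImM; exact: cvgD (cvgM u1 v2) (cvgM u2 v1).
Qed.

Lemma ccvgJ u z : ccvg u z -> ccvg (fun n => (u n)^*) z^*.
Proof.
have ReJ (x : C) : complex.Re x^* = complex.Re x by case: x.
have ImJ (x : C) : complex.Im x^* = - complex.Im x by case: x.
move=> [u1 u2]; split; first by rewrite ReJ; under eq_cvg do rewrite ReJ.
by rewrite ImJ; under eq_cvg do rewrite ImJ; exact: cvgN u2.
Qed.

Lemma ccvg_sum (I : Type) (r : seq I) (P : pred I) (F : nat -> I -> C) (G : I -> C) :
  (forall i, P i -> ccvg (fun n => F n i) (G i)) ->
  ccvg (fun n => \sum_(i <- r | P i) F n i) (\sum_(i <- r | P i) G i).
Proof.
move=> FG; elim: r => [|i r IH].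
  by rewrite big_nil; apply: eq_ccvg (ccvg_cst 0) => n; rewrite big_nil.
rewrite big_cons; case: ifP => Pi; last by apply: eq_ccvg IH => n; rewrite big_cons Pi.
by apply: eq_ccvg (ccvgD (FG i Pi) IH) => n; rewrite big_cons Pi.
Qed.

Lemma ccvg_unique u z w : ccvg u z -> ccvg u w -> z = w.
Proof.
move=> [uRe uIm] [uRe' uIm'].
have eqRe := cvg_unique (@Rhausdorff R) uRe uRe'.
have eqIm := cvg_unique (@Rhausdorff R) uIm uIm'.
by apply/eqP; rewrite eq_complex eqRe eqIm !eqxx.
Qed.

Lemma ccvg_lim_cst u z c : (forall n, u n = c) -> ccvg u z -> z = c.
Proof. by move=> uc uz; apply: ccvg_unique uz (eq_ccvg _ (ccvg_cst c)) => n. Qed.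

Lemma ccvg_ge0 u z : (forall n, 0 <= u n) -> ccvg u z -> 0 <= z.
Proof.
move=> u_ge0 [uRe uIm]; rewrite lecE; apply/andP; split.
  have Im0 n : complex.Im (u n) = 0 by have := u_ge0 n; rewrite lecE => /andP[/eqP].
  have uIm0 : (fun n => complex.Im (u n)) @ \oo --> 0.
    by under eq_cvg do rewrite Im0; exact: cvg_cst.
  by rewrite (cvg_unique (@Rhausdorff R) uIm uIm0).
rewrite -(cvg_lim (@Rhausdorff R) uRe); apply: limr_ge.
  by apply/cvg_ex; exists (complex.Re z).
by apply: nearW => n; have := u_ge0 n; rewrite lecE => /andP[].
Qed.

End ComplexConvergence.

Section MatrixConvergence.
Variable R : realType.
Local Notation C := (R[i]).

Definition mcvg m n (A : nat -> 'M[C]_(m, n)) (B : 'M[C]_(m, n)) : Prop :=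
  forall i j, ccvg (fun k => A k i j) (B i j).

Lemma eq_mcvg m n (A A' : nat -> 'M[C]_(m, n)) B : A =1 A' -> mcvg A B -> mcvg A' B.
Proof. by move=> /funext <-. Qed.

Lemma mcvg_cst m n (B : 'M[C]_(m, n)) : mcvg (fun=> B) B.
Proof. by move=> i j; exact: ccvg_cst. Qed.

Lemma mcvgD m n (A A' : nat -> 'M[C]_(m, n)) B B' :
  mcvg A B -> mcvg A' B' -> mcvg (fun k => A k + A' k) (B + B').
Proof.
move=> AB AB' i j; rewrite mxE.
by apply: eq_ccvg (ccvgD (AB i j) (AB' i j)) => k; rewrite mxE.
Qed.

Lemma mcvgN m n (A : nat -> 'M[C]_(m, n)) B : mcvg A B -> mcvg (fun k => - A k) (- B).
Proof.
by move=> AB i j; rewrite mxE; apply: eq_ccvg (ccvgN (AB i j)) => k; rewrite mxE.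
Qed.

Lemma mcvgB m n (A A' : nat -> 'M[C]_(m, n)) B B' :
  mcvg A B -> mcvg A' B' -> mcvg (fun k => A k - A' k) (B - B').
Proof. by move=> AB AB'; exact: mcvgD AB (mcvgN AB'). Qed.

Lemma mcvgZ m n (s : nat -> C) c (A : nat -> 'M[C]_(m, n)) B :
  ccvg s c -> mcvg A B -> mcvg (fun k => s k *: A k) (c *: B).
Proof.
move=> sc AB i j; rewrite mxE.
by apply: eq_ccvg (ccvgM sc (AB i j)) => k; rewrite mxE.
Qed.

Lemma mcvg_mulmx m n p (A : nat -> 'M[C]_(m, n)) (A' : nat -> 'M[C]_(n, p)) B B' :
  mcvg A B -> mcvg A' B' -> mcvg (fun k => A k *m A' k) (B *m B').
Proof.
move=> AB AB' i j; rewrite mxE.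
apply: eq_ccvg (ccvg_sum _ (F := fun k l => A k i l * A' k l j) _) => [k|l _].
  by rewrite mxE.
exact: ccvgM (AB i l) (AB' l j).
Qed.

Lemma mcvg_adj n (A : nat -> 'M[C]_n) B : mcvg A B -> mcvg (fun k => adj (A k)) (adj B).
Proof.
by move=> AB i j; rewrite !mxE; apply: eq_ccvg (ccvgJ (AB j i)) => k; rewrite !mxE.
Qed.

Lemma mcvg_sum (I : Type) m n (r : seq I) (P : pred I) (F : nat -> I -> 'M[C]_(m, n)) G :
  (forall i, P i -> mcvg (fun k => F k i) (G i)) ->
  mcvg (fun k => \sum_(i <- r | P i) F k i) (\sum_(i <- r | P i) G i).
Proof.
move=> FG i j; rewrite summxE.
apply: eq_ccvg (ccvg_sum r (F := fun k l => F k l i j) (G := fun l => G l i j) _).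
  by move=> k; rewrite summxE.
by move=> l Pl; exact: FG.
Qed.

Lemma ccvg_trace n (A : nat -> 'M[C]_n) B : mcvg A B -> ccvg (fun k => \tr (A k)) (\tr B).
Proof. by move=> AB; apply: ccvg_sum => i _; exact: AB. Qed.

Lemma mcvg_unique m n (A : nat -> 'M[C]_(m, n)) B B' : mcvg A B -> mcvg A B' -> B = B'.
Proof. by move=> AB AB'; apply/matrixP => i j; exact: ccvg_unique (AB i j) (AB' i j). Qed.

Lemma mcvg_lim_cst m n (A : nat -> 'M[C]_(m, n)) B B' :
  (forall k, A k = B') -> mcvg A B -> B = B'.
Proof.
by move=> AB' AB; apply/matrixP => i j; apply: ccvg_lim_cst (AB i j) => k; rewrite AB'.
Qed.

Lemma mcvg_lindblad n (L : 'M[C]_n -> 'M[C]_n) (A : nat -> 'M[C]_n) B :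
  lindblad_form L -> mcvg A B -> mcvg (fun k => L (A k)) (L B).
Proof.
move=> [H [hs [_ LE]]] AB; rewrite LE; apply: eq_mcvg (fun k => esym (LE (A k))) _.
have mul_left (M : 'M[C]_n) : mcvg (fun k => M *m A k) (M *m B).
  exact: mcvg_mulmx (mcvg_cst M) AB.
have mul_right (M : 'M[C]_n) : mcvg (fun k => A k *m M) (B *m M).
  exact: mcvg_mulmx AB (mcvg_cst M).
apply: mcvgD; first exact: mcvgZ (ccvg_cst _) (mcvgB (mul_left _) (mul_right _)).
apply: mcvg_sum => h _; apply: mcvgB; first exact: mcvg_mulmx (mul_left h) (mcvg_cst _).
exact: mcvgZ (ccvg_cst _) (mcvgD (mul_left _) (mul_right _)).
Qed.

End MatrixConvergence.

Section DensityMatrices.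
Variable R : realType.
Local Notation C := (R[i]).

Definition sesq d (A : 'M[C]_d) (u w : 'cV[C]_d) : C :=
  ((map_mx Num.conj u)^T *m A *m w) 0 0.

Lemma sesqDl d (A : 'M[C]_d) u u' w : sesq A (u + u') w = sesq A u w + sesq A u' w.
Proof. by rewrite /sesq map_mxD linearD /= !mulmxDl mxE. Qed.

Lemma sesqDr d (A : 'M[C]_d) u w w' : sesq A u (w + w') = sesq A u w + sesq A u w'.
Proof. by rewrite /sesq mulmxDr mxE. Qed.

Lemma sesqZl d (A : 'M[C]_d) t u w : sesq A (t *: u) w = t^* * sesq A u w.
Proof. by rewrite /sesq map_mxZ linearZ /= -!scalemxAl mxE. Qed.

Lemma sesqZr d (A : 'M[C]_d) t u w : sesq A u (t *: w) = t * sesq A u w.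
Proof. by rewrite /sesq -scalemxAr mxE. Qed.

Lemma sesq_delta d (A : 'M[C]_d) a b : sesq A (delta_mx a 0) (delta_mx b 0) = A a b.
Proof.
rewrite /sesq; have -> : map_mx Num.conj (delta_mx a 0 : 'cV[C]_d) = delta_mx a 0.
  by apply/matrixP => i j; rewrite !mxE rmorph_nat.
by rewrite trmx_delta -(rowE a A) -(colE b) !mxE.
Qed.

Lemma psd_diag_ge0 d (A : 'M[C]_d) a : psd A -> 0 <= complex.Re (A a a).
Proof.
case=> _ /(_ (delta_mx a 0)); rewrite -/(sesq A _ _) sesq_delta lecE.
by case/andP.
Qed.

Lemma density_diag_le1 d (A : 'M[C]_d) a : density A -> complex.Re (A a a) <= 1.
Proof.
case=> psdA trA; have : complex.Re (\tr A) = 1 by rewrite trA.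
rewrite /mxtrace raddf_sum (bigD1 a) //= => <-.
by rewrite lerDl; apply: sumr_ge0 => b _; exact: psd_diag_ge0.
Qed.

(* Positivity of the form at [e_a + t e_b] for [t = 1, -1, 'i, -'i] bounds the
   real and imaginary parts of [A a b] by [(A a a + A b b) / 2]. *)
Lemma density_entry_bound d (A : 'M[C]_d) a b : density A ->
  `|complex.Re (A a b)| <= 1 /\ `|complex.Im (A a b)| <= 1.
Proof.
move=> densA; have [[hermA psdA] _] := densA.
have Aba : A b a = Num.conj (A a b) by rewrite -{1}hermA !mxE.
have form_ge0 t : 0 <= complex.Re (A a a) + complex.Re (t * A a b)
    + complex.Re (t^* * Num.conj (A a b)) + complex.Re (t^* * t * A b b).
  have := psdA (delta_mx a 0 + t *: delta_mx b 0).
  rewrite -/(sesq A _ _) sesqDl !sesqDr !sesqZl !sesqZr !sesq_delta Aba lecE.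
  by case/andP => _; rewrite mulrA !raddfD /= !addrA.
have := density_diag_le1 a densA; have := density_diag_le1 b densA.
move: (form_ge0 1) (form_ge0 (-1)) (form_ge0 'i) (form_ge0 (- 'i)).
case: (A a a) => a1 a2; case: (A b b) => b1 b2; case: (A a b) => c1 c2 /=.
rewrite !ler_norml => Q1 Q2 Q3 Q4 ha hb.
by split; apply/andP; split; nra.
Qed.

End DensityMatrices.

Lemma increasing_seq_ge (f : nat -> nat) : increasing_seq f -> forall n, (n <= f n)%N.
Proof.
move=> incf; elim=> [//|n IH]; apply: leq_ltn_trans IH _.
rewrite ltnNge; apply/negP => le_fSn_fn.
have : (n.+1 <= n)%N by rewrite -incf.
by rewrite ltnn.
Qed.

Lemma increasing_seq_comp (f g : nat -> nat) :
  increasing_seq f -> increasing_seq g -> increasing_seq (f \o g).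
Proof. by move=> incf incg n m; exact: etrans (incf _ _) (incg _ _). Qed.

Lemma cvg_subseq (T : topologicalType) (u : nat -> T) (l : T) (f : nat -> nat) :
  increasing_seq f -> u @ \oo --> l -> (u \o f) @ \oo --> l.
Proof.
move=> incf ul; apply: cvg_comp ul => P [N _ NP].
by exists N => // n /= Nn; apply: NP; exact: leq_trans Nn (increasing_seq_ge incf n).
Qed.

Lemma bolzano_weierstrass_seq (R : realType) (I : eqType) (s : seq I)
    (u : nat -> I -> R) (M : R) :
  (forall n i, `|u n i| <= M) ->
  exists2 f : nat -> nat, increasing_seq f &
    forall i, i \in s -> cvgn (fun n => u (f n) i).
Proof.
move=> uM; elim: s => [|i0 s [f incf cvg_s]]; first by exists id.
have bnd : bounded_fun (fun n => u (f n) i0).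
  exists M; split; rewrite ?num_real // => x Mx n _.
  exact: le_trans (uM _ _) (ltW Mx).
have [g incg cvg_i0] := bolzano_weierstrass bnd.
exists (f \o g); first exact: increasing_seq_comp.
move=> i; rewrite in_cons => /orP[/eqP -> //|/cvg_s /cvg_ex[l ul]].
by apply/cvg_ex; exists l; exact: cvg_subseq incg ul.
Qed.

Section Limits.
Variable R : realType.
Local Notation C := (R[i]).

Lemma density_family_subseq_cvg d k (rho : nat -> 'I_k -> 'M[C]_d) :
  (forall n j, density (rho n j)) ->
  exists2 f : nat -> nat, increasing_seq f &
    exists sigma : 'I_k -> 'M[C]_d, forall j, mcvg (fun n => rho (f n) j) (sigma j).
Proof.
move=> dens.
pose I : finType := ('I_k * 'I_d * 'I_d * bool)%type.
pose u n (i : I) : R := let: (j, a, b, re) := i in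
  if re then complex.Re (rho n j a b) else complex.Im (rho n j a b).
have u_bound n i : `|u n i| <= 1.
  case: i => [[[j a] b] re]; have [bRe bIm] := density_entry_bound a b (dens n j).
  by case: re.
have [f incf cvg_u] := bolzano_weierstrass_seq (enum I) u_bound.
pose l i := lim ((fun n => u (f n) i) @ \oo).
have ul i : (fun n => u (f n) i) @ \oo --> l i by apply: cvg_u; rewrite mem_enum.
exists f => //.
exists (fun j => \matrix_(a, b) (l (j, a, b, true) +i* l (j, a, b, false))).
by move=> j a b; rewrite mxE; split;
  [exact: ul (j, a, b, true) | exact: ul (j, a, b, false)].
Qed.

Lemma density_limit d (A : nat -> 'M[C]_d) B :
  (forall n, density (A n)) -> mcvg A B -> density B.
Proof.
move=> dens AB; split; [split|].
- apply: mcvg_unique (mcvg_adj AB) (eq_mcvg _ AB) => n.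
  by have [[hermA _] _] := dens n; rewrite hermA.
- move=> v; apply: ccvg_ge0 (mcvg_mulmx (mcvg_mulmx (mcvg_cst _) AB) (mcvg_cst v) 0 0).
  by move=> n; have [[_ ->]] := dens n.
- apply: ccvg_lim_cst (ccvg_trace AB) => n.
  by have [] := dens n.
Qed.

Lemma pert_kernel_limit d (L0 L1 : 'M[C]_d -> 'M[C]_d) (eps : nat -> R)
    (A : nat -> 'M[C]_d) B :
  lindblad_form L0 -> lindblad_form L1 -> eps @ \oo --> 0 -> mcvg A B ->
  (forall n, pert L0 L1 (eps n) (A n) = 0) -> L0 B = 0.
Proof.
move=> L0_lind L1_lind eps0 AB ker.
have eps0C : ccvg (fun n => (eps n)%:C) 0 by split; [exact: eps0 | exact: cvg_cst].
have L0AB := mcvg_lindblad L0_lind AB.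
have : mcvg (fun n => L0 (A n)) (- (0 *: L1 B)).
  apply: eq_mcvg (mcvgN (mcvgZ eps0C (mcvg_lindblad L1_lind AB))) => n.
  by apply/esym/eqP; rewrite -addr_eq0; apply/eqP; exact: ker.
by rewrite scale0r oppr0; exact: mcvg_unique L0AB.
Qed.

Lemma orth_invariant_family_limit d (L0 L1 : 'M[C]_d -> 'M[C]_d) (eps : nat -> R) k :
  lindblad_form L0 -> lindblad_form L1 -> eps @ \oo --> 0 ->
  (forall n, orth_invariant_family (pert L0 L1 (eps n)) k) ->
  orth_invariant_family L0 k.
Proof.
move=> L0_lind L1_lind eps0 /choice[rho rho_fam].
have dens n j : density (rho n j) by have [] := rho_fam n.
have [f incf [sigma rho_sigma]] := density_family_subseq_cvg dens.
exists sigma; split; [|split] => j.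
- by apply: density_limit (rho_sigma j) => n; have [] := rho_fam (f n).
- apply: pert_kernel_limit L0_lind L1_lind (cvg_subseq incf eps0) (rho_sigma j) _.
  by move=> n; have [_ []] := rho_fam (f n).
- move=> l ne_jl; apply: mcvg_lim_cst (mcvg_mulmx (rho_sigma j) (rho_sigma l)) => n.
  by have [_ [_ ->]] := rho_fam (f n).
Qed.

End Limits.

Section MaximalFamilies.
Variable R : realType.
Local Notation C := (R[i]).

Lemma orth_invariant_family_le d (L : 'M[C]_d -> 'M[C]_d) k k' :
  (k' <= k)%N -> orth_invariant_family L k -> orth_invariant_family L k'.
Proof.
move=> le_k'k [rho [dens [inv orth]]].
exists (fun j => rho (widen_ord le_k'k j)); split; [|split] => // j l ne_jl.
by apply: orth; apply: contra ne_jl => /eqP/(congr1 val)/= eq_jl; apply/eqP/val_inj.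
Qed.

Lemma leq_nmax d (L : 'M[C]_d -> 'M[C]_d) k :
  (k <= d)%N -> orth_invariant_family L k -> (k <= nmax L)%N.
Proof.
move=> le_kd fam; apply: (leq_bigmax_cond (Ordinal (le_kd : k < d.+1)%N)).
exact/asboolP.
Qed.

Lemma lt_nmax d (L : 'M[C]_d -> 'M[C]_d) k :
  (k < nmax L)%N -> (k < d)%N /\ orth_invariant_family L k.+1.
Proof.
rewrite ltnNge => /bigmax_leqP not_le.
have [m /andP[/asboolP fam lt_km]] : exists m : 'I_d.+1,
    `[< orth_invariant_family L m >] && (k < m)%N.
  apply: contrapT => none; apply: not_le => m fam_m; rewrite leqNgt.
  by apply/negP => lt_km; apply: none; exists m; rewrite fam_m.
by split; [exact: leq_trans lt_km (ltn_ord m) | exact: orth_invariant_family_le fam].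
Qed.

End MaximalFamilies.

Theorem lemma1 (R : realType) (d : nat) (L0 L1 : 'M[R[i]]_d -> 'M[R[i]]_d) :
  lindblad_form L0 -> lindblad_form L1 ->
  exists2 delta : R, 0 < delta &
    forall eps : R, 0 < eps -> eps < delta ->
      (nmax (pert L0 L1 eps) <= nmax L0)%N.
Proof.
move=> L0_lind L1_lind; apply: contrapT => no_delta.
have large_nmax n : exists eps : R,
    [/\ 0 < eps, eps < n.+1%:R^-1 & (nmax L0 < nmax (pert L0 L1 eps))%N].
  apply: contrapT => none; apply: no_delta; exists n.+1%:R^-1 => [|eps eps_gt0 eps_lt].
    by rewrite invr_gt0 ltr0n.
  by rewrite leqNgt; apply/negP => lt_nmax_eps; apply: none; exists eps.
have [eps eps_large] := choice large_nmax.
have eps0 : eps @ \oo --> 0.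
  apply: (@squeeze_cvgr _ _ _ _ (fun=> 0) harmonic); last exact: cvg_harmonic.
    by apply: nearW => n; have [/ltW -> /ltW ->] := eps_large n.
  exact: cvg_cst.
have fam n : orth_invariant_family (pert L0 L1 (eps n)) (nmax L0).+1.
  by have [_ _ /lt_nmax[]] := eps_large n.
have [_ _ /lt_nmax[lt_nmax_d _]] := eps_large 0%N.
have := leq_nmax lt_nmax_d (orth_invariant_family_limit L0_lind L1_lind eps0 fam).
by rewrite ltnn.
Qed.
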